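(* Let $(\widetilde{\mathbf{x}}_\ell,y_\ell)$, $\ell=1,\dots,N$, be data with $\widetilde{\mathbf{x}}_\ell\in\mathbb{R}^d$, and let $y^N=(y_1,\dots,y_N)^\top$. Assume the Gram matrix $G$ is invertible. Write $G=U\Lambda U^\top$, where $U$ is orthogonal and $\Lambda=\mathrm{diag}(\widehat\mu_1,\dots,\widehat\mu_N)$. Let $D=\mathrm{diag}\big(\frac{\widehat\mu_1}{\widehat\mu_1+\lambda},\dots,\frac{\widehat\mu_N}{\widehat\mu_N+\lambda}\big)$. Then the $L^2$-boosting estimate after $m$ steps satisfies $$\|\widehat f^{(m)}\|_H^2=\frac1N(y^N)^\top U\big(I-(I-D)^m\big)^2\Lambda^{-1}U^\top y^N .$$
   Context: $H$ is an RKHS with positive definite kernel $K$; in the paper, $H=H_1\oplus\cdots\oplus H_d$ is the additive RKHS of Gaussian kernels on the coordinates. Gram matrix: $G_{ij}=K(\widetilde{\mathbf{x}}_i,\widetilde{\mathbf{x}}_j)/N$. Base learner: kernel ridge regression with fixed $\lambda>0$. Given $u\in\mathbb{R}^N$ it returns $\widehat g=\frac1{\sqrt N}\sum_\ell\beta_\ell K(\cdot,\widetilde{\mathbf{x}}_\ell)$ with $\beta=\frac1{\sqrt N}(G+\lambda I)^{-1}u$. Its fitted values are $Su$ with $S=G(G+\lambda I)^{-1}$. $L^2$-boosting: $\widehat f^{(0)}=0$ and $\widehat f^{(m+1)}=\widehat f^{(m)}+$(base learner fit to the residuals $y_\ell-\widehat f^{(m)}(\widetilde{\mathbf{x}}_\ell)$).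 The fitted values after $m$ steps are $(I-(I-S)^m)y^N$. *)

From HB Require Import structures.
From mathcomp Require Import all_boot all_order all_algebra.
From mathcomp Require Import reals.
Set Implicit Arguments. Unset Strict Implicit. Unset Printing Implicit Defensive.
Import Order.TTheory GRing.Theory Num.Theory.
Local Open Scope ring_scope.

Section RKHS.
Variables (R : realType) (X : Type).

(* An RKHS H of real functions on X with kernel K:
   - H is a real vector space with an inner product ip (bilinear, symmetric,
     positive definite);
   - ev f : X -> R is the function represented by f (injective: elements of H are functions);
   - kx y  is the kernel section K(., y) in H;
   - reproducing property: f(x) = <f, K(., x)>_H. *)
Record is_rkhs (H : lmodType R) (ip : H -> H -> R) (ev : H -> X -> R)
    (K : X -> X -> R) (kx : X -> H) : Prop := {
  rkhs_ip_linl : forall (a : R) (f g h : H), ip (a *: f + g) h = a * ip f h + ip g h;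
  rkhs_ip_sym  : forall f g : H, ip f g = ip g f;
  rkhs_ip_ge0  : forall f : H, 0 <= ip f f;
  rkhs_ip_eq0  : forall f : H, ip f f = 0 -> f = 0;
  rkhs_ev_inj  : forall f g : H, ev f =1 ev g -> f = g;
  rkhs_section : forall x y : X, ev (kx y) x = K x y;
  rkhs_reprod  : forall (f : H) (x : X), ev f x = ip f (kx x)
}.

Definition rkhs_norm2 (H : lmodType R) (ip : H -> H -> R) (f : H) : R := ip f f.

Variable (N : nat) (K : X -> X -> R) (xs : 'I_N -> X).

Definition gram : 'M[R]_N := \matrix_(i, j) (K (xs i) (xs j) / N%:R).

Variables (H : lmodType R) (ev : H -> X -> R) (kx : X -> H) (lam : R).

Definition krr_coef (u : 'cV[R]_N) : 'cV[R]_N :=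
  (Num.sqrt (N%:R : R))^-1 *: (invmx (gram + lam%:M) *m u).

Definition krr (u : 'cV[R]_N) : H :=
  (Num.sqrt (N%:R : R))^-1 *: \sum_(l < N) (krr_coef u l 0) *: kx (xs l).

Fixpoint boost (y : 'cV[R]_N) (m : nat) : H :=
  match m with
  | 0 => 0
  | m'.+1 => boost y m' + krr (\col_l (y l 0 - ev (boost y m') (xs l)))
  end.

End RKHS.

From HB Require Import structures.
From mathcomp Require Import all_boot all_order all_algebra.
From mathcomp Require Import reals ring.
Set Implicit Arguments. Unset Strict Implicit. Unset Printing Implicit Defensive.
Import Order.TTheory GRing.Theory Num.Theory.
Local Open Scope ring_scope.

(* Write f = (1/N) sum_l a_l K(., x_l).  Its values at the data
   points are G a and its squared norm is a^T G a / N.  The base learner fits the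
   coefficients (G + lam I)^-1 u, so each boosting step multiplies the residual
   by I - S, where S = G (G + lam I)^-1.  Hence the coefficients after m steps are
   G^-1 P y with P = I - (I - S)^m, and the squared norm is y^T P^T G^-1 P y / N.
   Conjugating by U turns S into D, G^-1 into Lambda^-1 and P into the diagonal
   matrix I - (I - D)^m.  Since G is positive semidefinite and lam > 0, every
   mu_i + lam is nonzero. *)

Section OrthogonalConjugation.
Variables (R : comUnitRingType) (n : nat) (U : 'M[R]_n).
Hypothesis UtU : U^T *m U = 1%:M.

Definition orth_conj (A : 'M[R]_n) : 'M[R]_n := U *m A *m U^T.

Lemma orth_conjM A B : orth_conj (A *m B) = orth_conj A *m orth_conj B.
Proof. by rewrite /orth_conj !mulmxA -(mulmxA _ U^T U) UtU mulmx1. Qed.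

Lemma orth_conj_scalar a : orth_conj a%:M = a%:M.
Proof. by rewrite /orth_conj mul_mx_scalar -scalemxAl mulmx1C // scalemx1. Qed.

Lemma orth_conjD A B : orth_conj (A + B) = orth_conj A + orth_conj B.
Proof. by rewrite /orth_conj mulmxDr mulmxDl. Qed.

Lemma orth_conjB A B : orth_conj (A - B) = orth_conj A - orth_conj B.
Proof. by rewrite /orth_conj mulmxBr mulmxBl. Qed.

Lemma orth_conjX A k : orth_conj (A ^+ k) = orth_conj A ^+ k.
Proof.
elim: k => [|k IHk]; first by rewrite !expr0 -idmxE orth_conj_scalar.
by rewrite !exprS -!mulmxE orth_conjM IHk.
Qed.

Lemma trmx_orth_conj A : (orth_conj A)^T = orth_conj A^T.
Proof. by rewrite /orth_conj !trmx_mul trmxK mulmxA. Qed.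

Lemma orth_conj_quad A (v : 'cV[R]_n) :
  (U *m v)^T *m orth_conj A *m (U *m v) = v^T *m A *m v.
Proof. by rewrite /orth_conj trmx_mul !mulmxA -!(mulmxA _ U^T U) UtU !mulmx1. Qed.

Lemma unitmx_orth_conj A : (orth_conj A \in unitmx) = (A \in unitmx).
Proof.
have [U_unit Ut_unit] := mulmx1_unit UtU.
by rewrite !unitmx_mul U_unit Ut_unit andbT.
Qed.

Lemma invmx_orth_conj A : A \in unitmx -> invmx (orth_conj A) = orth_conj (invmx A).
Proof.
move=> A_unit; have C_unit : orth_conj A \in unitmx by rewrite unitmx_orth_conj.
by rewrite -[RHS](mulKmx C_unit) -orth_conjM mulmxV // orth_conj_scalar mulmx1.
Qed.

End OrthogonalConjugation.

Section DiagonalMatrices.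
Variables (F : fieldType) (n : nat).
Implicit Types d : 'rV[F]_n.

Lemma diag_mxX d k : diag_mx d ^+ k = diag_mx (map_mx (fun x => x ^+ k) d).
Proof.
elim: k => [|k IHk].
  by rewrite expr0 -idmxE -diag_const_mx; congr diag_mx; apply/rowP => i; rewrite !mxE.
by rewrite exprS IHk -mulmxE mulmx_diag; congr diag_mx; apply/rowP => i; rewrite !mxE exprS.
Qed.

Lemma unitmx_diagP d : reflect (forall i, d 0 i != 0) (diag_mx d \in unitmx).
Proof.
rewrite unitmxE det_diag unitfE.
by apply: (iffP (prodf_neq0 _ _)) => d_neq0 i *; apply: d_neq0.
Qed.

Lemma invmx_diag d : (forall i, d 0 i != 0) -> invmx (diag_mx d) = diag_mx (map_mx GRing.inv d).
Proof.
move=> /unitmx_diagP d_unit; rewrite -[LHS]mulmx1.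
have <- : diag_mx d *m diag_mx (map_mx GRing.inv d) = 1%:M.
  rewrite mulmx_diag -diag_const_mx; congr diag_mx; apply/rowP => i.
  by rewrite !mxE mulfV //; apply/unitmx_diagP.
by rewrite mulKmx.
Qed.

End DiagonalMatrices.

Section KernelExpansion.
Variables (R : realType) (X : Type) (H : lmodType R) (ip : H -> H -> R)
  (ev : H -> X -> R) (K : X -> X -> R) (kx : X -> H).
Hypothesis rkhsH : is_rkhs ip ev K kx.

Lemma ip0l h : ip 0 h = 0.
Proof.
have := rkhs_ip_linl rkhsH 1 0 0 h; rewrite scale1r addr0 mul1r.
by rewrite -{1}[ip 0 h]addr0 => /addrI <-.
Qed.

Lemma ipDl f g h : ip (f + g) h = ip f h + ip g h.
Proof. by have := rkhs_ip_linl rkhsH 1 f g h; rewrite scale1r mul1r. Qed.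

Lemma ipZl a f h : ip (a *: f) h = a * ip f h.
Proof. by have := rkhs_ip_linl rkhsH a f 0 h; rewrite addr0 ip0l addr0. Qed.

Lemma ip_suml I (r : seq I) (P : pred I) (F : I -> H) h :
  ip (\sum_(i <- r | P i) F i) h = \sum_(i <- r | P i) ip (F i) h.
Proof. exact: (big_morph (ip^~ h) (fun f g => ipDl f g h) (ip0l h)). Qed.

Variables (N : nat) (xs : 'I_N -> X).
Local Notation G := (gram K xs).

Lemma trmx_gram : G^T = G.
Proof.
apply/matrixP => i j; rewrite !mxE -!(rkhs_section rkhsH) !(rkhs_reprod rkhsH).
by rewrite (rkhs_ip_sym rkhsH).
Qed.

Definition kexp (a : 'cV[R]_N) : H := N%:R^-1 *: \sum_l a l 0 *: kx (xs l).

Lemma kexp0 : kexp 0 = 0.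
Proof. by rewrite /kexp big1 ?scaler0 // => l _; rewrite mxE scale0r. Qed.

Lemma kexpD a b : kexp (a + b) = kexp a + kexp b.
Proof.
rewrite /kexp -scalerDr -big_split; congr (_ *: _).
by apply: eq_bigr => l _; rewrite mxE scalerDl.
Qed.

Lemma ev_kexp a i : ev (kexp a) (xs i) = (G *m a) i 0.
Proof.
rewrite (rkhs_reprod rkhsH) ipZl ip_suml mxE big_distrr /=.
apply: eq_bigr => l _; rewrite ipZl -(rkhs_reprod rkhsH) (rkhs_section rkhsH).
by rewrite !mxE; ring.
Qed.

Lemma rkhs_norm2_kexp a : rkhs_norm2 ip (kexp a) = N%:R^-1 * (a^T *m G *m a) 0 0.
Proof.
rewrite /rkhs_norm2 {1}/kexp ipZl ip_suml -mulmxA mxE; congr (_ * _).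
apply: eq_bigr => l _.
by rewrite ipZl (rkhs_ip_sym rkhsH) -(rkhs_reprod rkhsH) ev_kexp !mxE.
Qed.

Lemma gram_psd (a : 'cV[R]_N) : 0 <= (a^T *m G *m a) 0 0.
Proof.
have [N0 | N_gt0] := posnP N.
  by rewrite mxE big1 // => j; move: (ltn_ord j); rewrite [X in (_ < X)%N]N0.
have := rkhs_ip_ge0 rkhsH (kexp a).
by rewrite -/(rkhs_norm2 ip _) rkhs_norm2_kexp pmulr_rge0 // invr_gt0 ltr0n.
Qed.

Lemma gram_eigenvalue_ge0 U mu i : U^T *m U = 1%:M -> G = orth_conj U (diag_mx mu) ->
  0 <= mu 0 i.
Proof.
move=> UtU GE; have := gram_psd (U *m delta_mx i ord0).
by rewrite GE orth_conj_quad // trmx_delta -rowE -colE !mxE eqxx mulr1n.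
Qed.

Lemma krrE lam u : krr K xs kx lam u = kexp (invmx (G + lam%:M) *m u).
Proof.
rewrite /krr /kexp /krr_coef.
have -> : N%:R^-1 = (Num.sqrt (N%:R : R))^-1 * (Num.sqrt (N%:R : R))^-1.
  by rewrite -invfM -expr2 sqr_sqrtr // ler0n.
rewrite -scalerA; congr (_ *: _); rewrite scaler_sumr; apply: eq_bigr => l _.
by rewrite scalerA mxE.
Qed.

Lemma residual_kexp (y : 'cV[R]_N) a : \col_l (y l 0 - ev (kexp a) (xs l)) = y - G *m a.
Proof. by apply/matrixP => i j; rewrite ord1 !mxE ev_kexp mxE. Qed.

Variables (lam : R) (y : 'cV[R]_N).

Definition smoother : 'M[R]_N := G *m invmx (G + lam%:M).

Lemma smoother_orth_conj U mu : 0 < lam -> U^T *m U = 1%:M ->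
  G = orth_conj U (diag_mx mu) ->
  smoother = orth_conj U (diag_mx (\row_i (mu 0 i / (mu 0 i + lam)))).
Proof.
move=> lam_gt0 UtU GE.
have mulam_neq0 i : (mu + const_mx lam) 0 i != 0.
  by rewrite !mxE gt_eqF // ltr_wpDl // (gram_eigenvalue_ge0 i UtU GE).
rewrite /smoother GE -[lam%:M](orth_conj_scalar UtU) -orth_conjD -diag_const_mx -raddfD.
rewrite invmx_orth_conj //; last exact/unitmx_diagP.
rewrite -orth_conjM // invmx_diag // mulmx_diag; congr (orth_conj U (diag_mx _)).
by apply/rowP => i; rewrite !mxE.
Qed.

Lemma boostE m : G \in unitmx ->
  boost K xs ev kx lam y m = kexp (invmx G *m (1%:M - (1%:M - smoother) ^+ m) *m y).
Proof.
move=> G_unit; elim: m => [|m IHm] /=; first by rewrite expr0 subrr mulmx0 mul0mx kexp0.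
rewrite IHm krrE residual_kexp -kexpD; congr kexp.
set Q := (1%:M - smoother) ^+ m.
have -> : 1%:M - (1%:M - smoother) ^+ m.+1 = 1%:M - Q + smoother *m Q.
  by rewrite exprS -mulmxE mulmxBl mul1mx opprB addrCA addrC.
rewrite [G *m _]mulmxA !mulmxA mulmxV // mul1mx mulmxBl mul1mx subKr.
by rewrite [in RHS]mulmxDr [in RHS]mulmxDl /smoother !mulmxA mulVmx // mul1mx.
Qed.

Lemma rkhs_norm2_boost m : G \in unitmx ->
  let P := 1%:M - (1%:M - smoother) ^+ m in
  rkhs_norm2 ip (boost K xs ev kx lam y m) = N%:R^-1 * (y^T *m (P^T *m invmx G *m P) *m y) 0 0.
Proof.
move=> G_unit P; rewrite boostE // rkhs_norm2_kexp; congr (_ * _).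
by rewrite !trmx_mul trmx_inv trmx_gram !mulmxA mulmxKV.
Qed.

End KernelExpansion.

Theorem lemma3 (R : realType) (d N : nat)
    (H : lmodType R) (ip : H -> H -> R) (ev : H -> 'rV[R]_d -> R)
    (K : 'rV[R]_d -> 'rV[R]_d -> R) (kx : 'rV[R]_d -> H)
    (xs : 'I_N -> 'rV[R]_d) (y : 'cV[R]_N) (lam : R)
    (U : 'M[R]_N) (mu : 'rV[R]_N) (m : nat) :
  is_rkhs ip ev K kx ->
  0 < lam ->
  gram K xs \in unitmx ->
  U^T *m U = 1%:M ->
  gram K xs = U *m diag_mx mu *m U^T ->
  let D := diag_mx (\row_i (mu 0 i / (mu 0 i + lam))) in
  rkhs_norm2 ip (boost K xs ev kx lam y m) =
    (N%:R)^-1 *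
    (y^T *m U *m (1%:M - (1%:M - D) ^+ m) ^+ 2 *m invmx (diag_mx mu) *m U^T *m y) 0 0.
Proof.
move=> rkhsH lam_gt0 G_unit UtU GE D.
set G := gram K xs in G_unit GE *; change (G = orth_conj U (diag_mx mu)) in GE.
have mu_unit : diag_mx mu \in unitmx by rewrite -(unitmx_orth_conj UtU) -GE.
rewrite rkhs_norm2_boost // (smoother_orth_conj rkhsH lam_gt0 UtU GE) -/D.
set Q := 1%:M - (1%:M - D) ^+ m.
have -> : 1%:M - (1%:M - orth_conj U D) ^+ m = orth_conj U Q.
  by rewrite orth_conjB orth_conjX // orth_conjB orth_conj_scalar.
have [q ->] : exists q, Q = diag_mx q.
  by rewrite /Q -diag_const_mx -raddfB diag_mxX -raddfB; eexists.
rewrite trmx_orth_conj tr_diag_mx -/G GE invmx_orth_conj // -!orth_conjM //.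
rewrite invmx_diag; last exact/unitmx_diagP.
by rewrite -(mulmxA (diag_mx q)) (diag_mxC _ q) /orth_conj expr2 -mulmxE !mulmxA.
Qed.
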